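(* For formulas of the language LTL: (1) $\mathbf{AX}^{gen}$ is sound and complete with respect to $\mathcal{M}$, the class of all finite and infinite temporal structures. (2) $\mathbf{AX}^{inf}$ is sound and complete with respect to $\mathcal{M}^{inf}$, the class of infinite temporal structures. (3) $\mathbf{AX}^{fin}$ is sound and complete with respect to $\mathcal{M}^{fin}$, the class of finite temporal structures. Here ''sound and complete with respect to a class $\mathcal{C}$'' means: a formula is provable in the axiomatization if and only if it is true at every position of every structure in $\mathcal{C}$.
   Context: LTL formulas are built from primitive propositions $p$ in a set $\Phi_0$ by the grammar $\phi,\psi ::= p \mid \neg\phi \mid \phi\wedge\psi \mid \bigcirc\phi \mid \phi\,\mathcal{U}\,\psi$. Abbreviations: $\phi\vee\psi := \neg(\neg\phi\wedge\neg\psi)$, $\phi\Rightarrow\psi := \neg\phi\vee\psi$, $\mathit{true}$ is a fixed propositional tautology, $\mathit{false} := \neg\mathit{true}$, $\Diamond\phi := \mathit{true}\,\mathcal{U}\,\phi$, $\Box\phi := \neg\Diamond\neg\phi$, and $\overline{\bigcirc}\phi := \neg\bigcirc\neg\phi$ (''strong next''; $\bigcirc$ is ''weak next''). A temporal structure is $M=(S,\sigma,\pi)$ with $S$ a set of states, $\sigma=s_0s_1\dots$ a finite (nonempty) or infinite sequence of states of $S$, and $\pi(s)\subseteq\Phi_0$ the propositions true at $s$. $M$ is finite iff $\sigma$ is finite. Positions of $\sigma$ are the indices $i$ of its elements. Truth at position $i$: $(M,i)\models p$ iff $p\in\pi(s_i)$; negation and conjunction as usual; $(M,i)\models\bigcirc\phi$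 iff $i$ is the last position of $\sigma$ (if $\sigma$ is finite) or $(M,i+1)\models\phi$; $(M,i)\models\phi\,\mathcal{U}\,\psi$ iff there is a position $j\ge i$ with $(M,j)\models\psi$ and $(M,k)\models\phi$ for all $i\le k<j$. (So $\bigcirc\mathit{false}$ holds exactly at the last position of a finite sequence.) $\mathbf{AX}^{gen}$ consists of: Prop: all instances of propositional tautologies; MP: from $\phi$ and $\phi\Rightarrow\psi$ infer $\psi$; T1: $\bigcirc\phi\wedge\bigcirc(\phi\Rightarrow\psi)\Rightarrow\bigcirc\psi$; T2': $\phi\,\mathcal{U}\,\psi\Leftrightarrow\psi\vee(\phi\wedge\overline{\bigcirc}(\phi\,\mathcal{U}\,\psi))$; T3': $\bigcirc\phi\Leftrightarrow(\bigcirc\mathit{false}\vee\overline{\bigcirc}\phi)$; RT1: from $\phi$ infer $\bigcirc\phi$; RT2: from $\phi'\Rightarrow\neg\psi\wedge\bigcirc\phi'$ infer $\phi'\Rightarrow\neg(\phi\,\mathcal{U}\,\psi)$. $\mathbf{AX}^{inf}$ is $\mathbf{AX}^{gen}$ plus the axiom Inf: $\neg\bigcirc\mathit{false}$. $\mathbf{AX}^{fin}$ is $\mathbf{AX}^{gen}$ plus the axiom Fin: $\Diamond\bigcirc\mathit{false}$. *)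

From Stdlib Require Import Arith.
Set Implicit Arguments.

Section LTL.
Variable Phi0 : Type.

Inductive form : Type :=
| FVar : Phi0 -> form
| FNeg : form -> form
| FAnd : form -> form -> form
| FNext : form -> form
| FUntil : form -> form -> form.

Definition FOr (a b : form) : form := FNeg (FAnd (FNeg a) (FNeg b)).
Definition FImp (a b : form) : form := FOr (FNeg a) b.
Definition FIff (a b : form) : form := FAnd (FImp a b) (FImp b a).
Definition FTrue (p0 : Phi0) : form := FNeg (FAnd (FVar p0) (FNeg (FVar p0))).
Definition FFalse (p0 : Phi0) : form := FNeg (FTrue p0).
Definition FEv (p0 : Phi0) (a : form) : form := FUntil (FTrue p0) a.
Definition FAlw (p0 : Phi0) (a : form) : form := FNeg (FEv p0 (FNeg a)).
Definition FSNext (a : form) : form := FNeg (FNext (FNeg a)).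

Inductive pform : Type :=
| PVar : nat -> pform
| PNeg : pform -> pform
| PAnd : pform -> pform -> pform.

Fixpoint peval (v : nat -> bool) (f : pform) : bool :=
  match f with
  | PVar n => v n
  | PNeg g => negb (peval v g)
  | PAnd g h => andb (peval v g) (peval v h)
  end.

Definition ptaut (f : pform) : Prop := forall v, peval v f = true.

Fixpoint psubst (s : nat -> form) (f : pform) : form :=
  match f with
  | PVar n => s n
  | PNeg g => FNeg (psubst s g)
  | PAnd g h => FAnd (psubst s g) (psubst s h)
  end.

Definition taut_instance (phi : form) : Prop :=
  exists (f : pform) (s : nat -> form), ptaut f /\ psubst s f = phi.

Inductive provable (p0 : Phi0) (extra : form -> Prop) : form -> Prop :=
| Ax_Prop : forall phi, taut_instance phi -> provable p0 extra phi
| Ax_extra : forall phi, extra phi -> provable p0 extra phi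
| R_MP : forall phi psi, provable p0 extra phi ->
    provable p0 extra (FImp phi psi) -> provable p0 extra psi
| Ax_T1 : forall phi psi,
    provable p0 extra (FImp (FAnd (FNext phi) (FNext (FImp phi psi))) (FNext psi))
| Ax_T2' : forall phi psi,
    provable p0 extra (FIff (FUntil phi psi)
                            (FOr psi (FAnd phi (FSNext (FUntil phi psi)))))
| Ax_T3' : forall phi,
    provable p0 extra (FIff (FNext phi) (FOr (FNext (FFalse p0)) (FSNext phi)))
| R_RT1 : forall phi, provable p0 extra phi -> provable p0 extra (FNext phi)
| R_RT2 : forall phi phi' psi,
    provable p0 extra (FImp phi' (FAnd (FNeg psi) (FNext phi'))) ->
    provable p0 extra (FImp phi' (FNeg (FUntil phi psi))).

Definition no_extra : form -> Prop := fun _ => False.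
Definition inf_axiom (p0 : Phi0) : form -> Prop :=
  fun phi => phi = FNeg (FNext (FFalse p0)).
Definition fin_axiom (p0 : Phi0) : form -> Prop :=
  fun phi => phi = FEv p0 (FNext (FFalse p0)).

Definition AXgen (p0 : Phi0) := provable p0 no_extra.
Definition AXinf (p0 : Phi0) := provable p0 (inf_axiom p0).
Definition AXfin (p0 : Phi0) := provable p0 (fin_axiom p0).

(* Temporal structures M = (S, sigma, pi).  sigma is given by [tseq] together
   with [tlen]: tlen = None means sigma is infinite (s_0 s_1 ...), and
   tlen = Some n means sigma = s_0 ... s_n is finite (nonempty); in that
   case the values tseq i for i > n are irrelevant. *)
Record tstruct : Type := TStruct {
  tstate : Type;
  tseq : nat -> tstate;
  tlen : option nat;
  tpi : tstate -> Phi0 -> Prop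
}.

Definition is_pos (M : tstruct) (i : nat) : Prop :=
  match tlen M with None => True | Some n => i <= n end.

Definition is_last (M : tstruct) (i : nat) : Prop := tlen M = Some i.

Fixpoint sat (M : tstruct) (i : nat) (phi : form) : Prop :=
  match phi with
  | FVar p => tpi M (tseq M i) p
  | FNeg a => ~ sat M i a
  | FAnd a b => sat M i a /\ sat M i b
  | FNext a => is_last M i \/ sat M (S i) a
  | FUntil a b => exists j, i <= j /\ is_pos M j /\ sat M j b /\
                    (forall k, i <= k < j -> sat M k a)
  end.

Definition is_finite (M : tstruct) : Prop := exists n, tlen M = Some n.
Definition is_infinite (M : tstruct) : Prop := tlen M = None.

Definition valid_in (C : tstruct -> Prop) (phi : form) : Prop :=
  forall M : tstruct, C M -> forall i, is_pos M i -> sat M i phi.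

End LTL.

From Stdlib Require Import Arith Lia List Bool Classical ClassicalEpsilon.
Import ListNotations.

(** Completeness is proved by a
    canonical model over the finite closure [Cl] of the unprovable formula:
    atoms are the consistent truth assignments to [Cl], read as conjunctions
    [chi A], and [B] may follow [A] when [chi A /\ strong-next chi B] is
    consistent.  Every atom has a successor unless it proves [O false].  An
    eventuality [a U b] in an atom is fulfilled along some path of
    successors: otherwise the disjunction of the atoms reachable from it is an
    invariant of [~ b /\ O _], and rule RT2 refutes [a U b].  Chaining paths
    that fulfil all eventualities of their first atom gives a sequence in
    which every formula of [Cl] is true exactly where the atom contains it;
    the sequence is finite exactly when it meets an atom proving [O false],
    which the axiom Inf forbids and the axiom Fin enforces. *)

Section LTL.
Variable Phi0 : Type.
Variable p0 : Phi0.
Notation F := (form Phi0).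

Definition decP (P : Prop) : bool :=
  if excluded_middle_informative P then true else false.

Lemma decP_true P : decP P = true <-> P.
Proof. unfold decP; destruct excluded_middle_informative; intuition congruence. Qed.

Lemma decP_false P : decP P = false <-> ~ P.
Proof. unfold decP; destruct excluded_middle_informative; intuition congruence. Qed.

Lemma least_witness (P : nat -> Prop) n :
  P n -> exists m, P m /\ forall k, k < m -> ~ P k.
Proof.
  induction n as [n IH] using lt_wf_ind; intros Hn.
  destruct (classic (exists k, k < n /\ P k)) as [[k [Hk Pk]]|Hnone].
  - exact (IH k Hk Pk).
  - exists n; split; [exact Hn|]. intros k Hk Pk; apply Hnone; eauto.
Qed.

(* Variables, next- and until-formulas are the propositional atoms. *)
Fixpoint beval (V : F -> bool) (f : F) : bool :=
  match f with
  | FNeg a => negb (beval V a)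
  | FAnd a b => beval V a && beval V b
  | _ => V f
  end.

Fixpoint prop_atoms (f : F) : list F :=
  match f with
  | FNeg a => prop_atoms a
  | FAnd a b => prop_atoms a ++ prop_atoms b
  | _ => [f]
  end.

Fixpoint atom_index (L : list F) (a : F) : nat :=
  match L with
  | [] => 0
  | x :: l => if decP (x = a) then 0 else S (atom_index l a)
  end.

Lemma nth_atom_index L a d : In a L -> nth (atom_index L a) L d = a.
Proof.
  induction L as [|x L IH]; simpl; intros H; [contradiction|].
  unfold decP at 1; destruct (excluded_middle_informative (x = a)) as [E|E].
  - exact E.
  - destruct H; [contradiction | simpl; auto].
Qed.

Fixpoint skeleton (L : list F) (f : F) : pform :=
  match f with
  | FNeg a => PNeg (skeleton L a)
  | FAnd a b => PAnd (skeleton L a) (skeleton L b)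
  | _ => PVar (atom_index L f)
  end.

Lemma psubst_skeleton L d g :
  incl (prop_atoms g) L -> psubst (fun n => nth n L d) (skeleton L g) = g.
Proof.
  induction g; simpl; intros H;
    try (rewrite nth_atom_index; [reflexivity | apply H; left; reflexivity]).
  - now rewrite IHg.
  - rewrite IHg1, IHg2; auto; intros x Hx; apply H, in_or_app; auto.
Qed.

Lemma peval_skeleton L v g :
  peval v (skeleton L g) = beval (fun a => v (atom_index L a)) g.
Proof. induction g; simpl; now rewrite ?IHg, ?IHg1, ?IHg2. Qed.

Lemma taut_instance_beval f : (forall V, beval V f = true) -> taut_instance f.
Proof.
  intros H. exists (skeleton (prop_atoms f) f), (fun n => nth n (prop_atoms f) f).
  split.
  - intro v. rewrite peval_skeleton. apply H.
  - apply psubst_skeleton, incl_refl.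
Qed.

Fixpoint big_and (L : list F) : F :=
  match L with [] => FTrue p0 | x :: l => FAnd x (big_and l) end.

Fixpoint big_or (L : list F) : F :=
  match L with [] => FFalse p0 | x :: l => FOr x (big_or l) end.

Lemma beval_big_and V L : beval V (big_and L) = forallb (beval V) L.
Proof.
  induction L as [|x L IH]; simpl; [now destruct (V (FVar p0)) | now rewrite IH].
Qed.

Lemma beval_big_or V L : beval V (big_or L) = existsb (beval V) L.
Proof.
  induction L as [|x L IH]; simpl; [now destruct (V (FVar p0))|].
  rewrite IH. now destruct (beval V x), (existsb (beval V) L).
Qed.

Lemma beval_imp V a b : beval V (FImp a b) = implb (beval V a) (beval V b).
Proof. simpl. now destruct (beval V a), (beval V b). Qed.

Section Semantics.
Variable M : tstruct Phi0.

Lemma sat_imp i a b : sat M i (FImp a b) <-> (sat M i a -> sat M i b).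
Proof. simpl. split; [intros H Ha; apply NNPP; tauto | tauto]. Qed.

Lemma sat_or i a b : sat M i (FOr a b) <-> sat M i a \/ sat M i b.
Proof. simpl. split; [intros H; apply NNPP; tauto | tauto]. Qed.

Lemma sat_iff i a b : sat M i (FIff a b) <-> (sat M i a <-> sat M i b).
Proof.
  change (sat M i (FImp a b) /\ sat M i (FImp b a) <-> (sat M i a <-> sat M i b)).
  rewrite !sat_imp. tauto.
Qed.

Lemma sat_true i : sat M i (FTrue p0).
Proof. simpl; tauto. Qed.

Lemma sat_false i : ~ sat M i (FFalse p0).
Proof. intros H; apply H, sat_true. Qed.

Lemma sat_snext i a : sat M i (FSNext a) <-> ~ is_last M i /\ sat M (S i) a.
Proof. simpl. split; [intros H; split; [|apply NNPP]; tauto | tauto]. Qed.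

Lemma sat_psubst i s f :
  sat M i (psubst s f) <-> peval (fun n => decP (sat M i (s n))) f = true.
Proof.
  induction f as [n|g IH|g IHg h IHh]; simpl.
  - now rewrite decP_true.
  - rewrite IH. now destruct (peval _ g).
  - now rewrite IHg, IHh, andb_true_iff.
Qed.

Lemma pos0 : is_pos M 0.
Proof. unfold is_pos; destruct (tlen M); auto; lia. Qed.

Lemma pos_succ i : is_pos M i -> ~ is_last M i -> is_pos M (S i).
Proof.
  unfold is_last, is_pos; destruct (tlen M) as [n|]; auto.
  intros H1 H2. assert (i <> n) by congruence. lia.
Qed.

Lemma pos_le i j : is_pos M j -> i <= j -> is_pos M i.
Proof. unfold is_pos; destruct (tlen M); auto; lia. Qed.

Lemma not_last_lt i j : is_pos M j -> i < j -> ~ is_last M i.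
Proof.
  unfold is_pos, is_last; destruct (tlen M); intros H1 H2 H3; [injection H3|]; congruence || lia.
Qed.

Lemma sat_until_unfold i a b : is_pos M i ->
  sat M i (FUntil a b) <->
  sat M i b \/ (sat M i a /\ sat M i (FSNext (FUntil a b))).
Proof.
  intros Hi; rewrite sat_snext; simpl; split.
  - intros [j [Hij [Hpj [Hb Ha]]]].
    destruct (Nat.eq_dec i j) as [<-|Hne]; [now left|right].
    split; [apply Ha; lia|]. split; [apply (not_last_lt i j); auto; lia|].
    exists j. repeat split; auto; [lia|]. intros k Hk; apply Ha; lia.
  - intros [Hb | [Ha [_ [j [Hij [Hpj [Hb Hk]]]]]]].
    + exists i. repeat split; auto; lia.
    + exists j. repeat split; auto; [lia|]. intros k Hk'.
      destruct (Nat.eq_dec k i) as [->|]; [exact Ha | apply Hk; lia].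
Qed.

(* The semantic content of rule RT2. *)
Lemma not_until_of_invariant i a b inv :
  (forall k, i <= k -> is_pos M k -> sat M k inv ->
     ~ sat M k b /\ (is_last M k \/ sat M (S k) inv)) ->
  sat M i inv -> ~ sat M i (FUntil a b).
Proof.
  intros Hinv Hi [j [Hij [Hpj [Hb _]]]].
  assert (Hreach : forall d, i + d <= j -> sat M (i + d) inv).
  { induction d as [|d IH]; intros Hd; [now rewrite Nat.add_0_r|].
    assert (Hpd : is_pos M (i + d)) by (apply (pos_le _ j); auto; lia).
    destruct (Hinv (i + d) ltac:(lia) Hpd (IH ltac:(lia))) as [_ [Hl|Hs]].
    - exfalso; apply (not_last_lt (i + d) j); auto; lia.
    - now replace (i + S d) with (S (i + d)) by lia. }
  specialize (Hreach (j - i) ltac:(lia)). replace (i + (j - i)) with j in Hreach by lia.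
  now apply (Hinv j Hij Hpj Hreach).
Qed.
End Semantics.

Lemma soundness (C : tstruct Phi0 -> Prop) extra :
  (forall phi, extra phi -> valid_in C phi) ->
  forall phi, provable p0 extra phi -> valid_in C phi.
Proof.
  intros Hextra phi Hpv. induction Hpv as
    [phi [f [s [Hf <-]]] | phi Hphi | phi psi _ IH1 _ IH2 | phi psi | phi psi
    | phi | phi _ IH | phi phi' psi _ IH]; intros M HM i Hi.
  - apply sat_psubst, Hf.
  - now apply Hextra.
  - specialize (IH2 M HM i Hi). rewrite sat_imp in IH2. auto.
  - rewrite sat_imp; cbn [sat]; rewrite sat_imp; tauto.
  - rewrite sat_iff, sat_or, sat_until_unfold by exact Hi. reflexivity.
  - rewrite sat_iff, sat_or, sat_snext; cbn [sat].
    pose proof (sat_false M (S i)). destruct (classic (is_last M i)); tauto.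
  - cbn [sat]. destruct (classic (is_last M i)) as [Hl|Hl]; [now left|right].
    apply IH; auto using pos_succ.
  - rewrite sat_imp. apply not_until_of_invariant.
    intros k _ Hk Hinv. specialize (IH M HM k Hk). rewrite sat_imp in IH.
    exact (IH Hinv).
Qed.

Definition immediate_subformulas (g : F) : list F :=
  match g with
  | FVar _ => []
  | FNeg a | FNext a => [a]
  | FAnd a b | FUntil a b => [a; b]
  end.

Definition subformula_closed (L : list F) : Prop :=
  forall g, In g L -> incl (immediate_subformulas g) L.

Fixpoint subformulas (f : F) : list F :=
  f :: match f with
       | FVar _ => []
       | FNeg a | FNext a => subformulas a
       | FAnd a b | FUntil a b => subformulas a ++ subformulas b
       end.

Lemma subformulas_self f : In f (subformulas f).
Proof. destruct f; now left. Qed.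

Lemma immediate_subformulas_incl g : incl (immediate_subformulas g) (subformulas g).
Proof.
  destruct g; simpl; intros x Hx; repeat destruct Hx as [<-|Hx]; try contradiction;
    right; auto using subformulas_self, in_or_app.
Qed.

Lemma subformulas_trans f g : In g (subformulas f) -> incl (subformulas g) (subformulas f).
Proof.
  induction f; simpl; intros [<-|H]; try apply incl_refl; try contradiction;
    apply incl_tl; auto.
  all: apply in_app_or in H; destruct H; [apply incl_appl | apply incl_appr]; auto.
Qed.

Lemma subformulas_closed f : subformula_closed (subformulas f).
Proof.
  intros g Hg. eapply incl_tran; [apply immediate_subformulas_incl|].
  now apply subformulas_trans.
Qed.

Lemma subformula_closed_app L1 L2 :
  subformula_closed L1 -> subformula_closed L2 -> subformula_closed (L1 ++ L2).
Proof.
  intros H1 H2 g Hg. apply in_app_or in Hg.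
  destruct Hg; [apply incl_appl | apply incl_appr]; auto.
Qed.

Section Completeness.
Variable extra : F -> Prop.
Notation Pv := (provable p0 extra).

Lemma provable_tautology f : (forall V, beval V f = true) -> Pv f.
Proof. intro H; apply Ax_Prop, taut_instance_beval, H. Qed.

Ltac truth_table :=
  let V := fresh "V" in
  intro V; simpl;
  repeat match goal with
         | |- context [beval V ?x] => destruct (beval V x)
         | |- context [V ?x] => destruct (V x)
         end;
  simpl; intuition congruence.

Lemma provable_big_and L : Forall Pv L -> Pv (big_and L).
Proof.
  induction 1 as [|x L Hx _ IH].
  - apply provable_tautology; truth_table.
  - eapply R_MP; [exact IH|]. eapply R_MP; [exact Hx|].
    apply provable_tautology; truth_table.
Qed.

Lemma provable_prop L c : Forall Pv L ->
  (forall V, forallb (beval V) L = true -> beval V c = true) -> Pv c.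
Proof.
  intros HL Hc. eapply R_MP; [apply provable_big_and, HL|].
  apply provable_tautology. intro V. rewrite beval_imp, beval_big_and.
  destruct (forallb (beval V) L) eqn:E; simpl; auto.
Qed.

(* [propositional L] proves the goal by a truth table from the formulas [L],
   each of which must be a hypothesis. *)
Ltac propositional L :=
  apply (provable_prop L);
  [repeat (apply Forall_cons; [assumption|]); apply Forall_nil | truth_table].

Lemma provable_next_mono a b : Pv (FImp a b) -> Pv (FImp (FNext a) (FNext b)).
Proof.
  intro H. pose proof (R_RT1 H) as H1. pose proof (Ax_T1 p0 extra a b) as H2.
  propositional [FNext (FImp a b); FImp (FAnd (FNext a) (FNext (FImp a b))) (FNext b)].
Qed.

Lemma provable_next_big_and L b :
  Pv (FImp (big_and L) b) -> Pv (FImp (big_and (map (@FNext Phi0) L)) (FNext b)).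
Proof.
  revert b; induction L as [|x L IH]; intros b H; simpl in *.
  - assert (Hb : Pv b) by propositional [FImp (FTrue p0) b].
    pose proof (R_RT1 Hb). propositional [FNext b].
  - assert (H1 : Pv (FImp (big_and L) (FImp x b))) by propositional [FImp (FAnd x (big_and L)) b].
    apply IH in H1. pose proof (Ax_T1 p0 extra x b) as H2.
    propositional [FImp (big_and (map (@FNext Phi0) L)) (FNext (FImp x b));
                   FImp (FAnd (FNext x) (FNext (FImp x b))) (FNext b)].
Qed.

Lemma provable_big_and_elem L x : In x L -> Pv (FImp (big_and L) x).
Proof.
  intro H. apply provable_tautology. intro V. rewrite beval_imp, beval_big_and.
  destruct (forallb (beval V) L) eqn:E; auto.
  rewrite forallb_forall in E. now rewrite (E x H).
Qed.

Lemma provable_big_or_intro L x : In x L -> Pv (FImp x (big_or L)).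
Proof.
  intro H. apply provable_tautology. intro V. rewrite beval_imp, beval_big_or.
  destruct (beval V x) eqn:E; auto. simpl. apply existsb_exists; eauto.
Qed.

Lemma provable_big_or_elim L c :
  (forall x, In x L -> Pv (FImp x c)) -> Pv (FImp (big_or L) c).
Proof.
  induction L as [|x L IH]; intros H; simpl.
  - apply provable_tautology; truth_table.
  - assert (H1 : Pv (FImp x c)) by (apply H; now left).
    assert (H2 : Pv (FImp (big_or L) c)) by (apply IH; intros; apply H; now right).
    propositional [FImp x c; FImp (big_or L) c].
Qed.

Lemma provable_big_or_incl L L' : incl L L' -> Pv (FImp (big_or L) (big_or L')).
Proof.
  intro H. apply provable_big_or_elim. intros x Hx. apply provable_big_or_intro, H, Hx.
Qed.

Lemma provable_big_or_filter {X} (g : X -> F) (f : X -> bool) L :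
  Pv (FImp (FAnd (big_or (map g L))
                 (big_and (map (fun x => FNeg (g x)) (filter (fun x => negb (f x)) L))))
           (big_or (map g (filter f L)))).
Proof.
  induction L as [|x L IH]; simpl; [apply provable_tautology; truth_table|].
  destruct (f x); simpl;
    propositional [FImp (FAnd (big_or (map g L))
        (big_and (map (fun x => FNeg (g x)) (filter (fun x => negb (f x)) L))))
        (big_or (map g (filter f L)))].
Qed.

Lemma provable_final_next a : Pv (FImp (FNext (FFalse p0)) (FNext a)).
Proof. apply provable_next_mono, provable_tautology; truth_table. Qed.

Lemma provable_not_next a : Pv (FImp (FNeg (FNext a)) (FNext (FNeg a))).
Proof.
  pose proof (Ax_T3' p0 extra a).
  propositional [FIff (FNext a) (FOr (FNext (FFalse p0)) (FSNext a))].
Qed.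

Lemma provable_until_intro a b : Pv (FImp b (FUntil a b)).
Proof.
  pose proof (Ax_T2' p0 extra a b).
  propositional [FIff (FUntil a b) (FOr b (FAnd a (FSNext (FUntil a b))))].
Qed.

Lemma provable_until_left a b : Pv (FImp (FAnd (FUntil a b) (FNeg b)) a).
Proof.
  pose proof (Ax_T2' p0 extra a b).
  propositional [FIff (FUntil a b) (FOr b (FAnd a (FSNext (FUntil a b))))].
Qed.

Lemma provable_until_next a b :
  Pv (FImp (FAnd (FUntil a b) (FNeg b)) (FNext (FUntil a b))).
Proof.
  pose proof (Ax_T2' p0 extra a b). pose proof (Ax_T3' p0 extra (FUntil a b)).
  propositional [FIff (FUntil a b) (FOr b (FAnd a (FSNext (FUntil a b))));
    FIff (FNext (FUntil a b)) (FOr (FNext (FFalse p0)) (FSNext (FUntil a b)))].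
Qed.

Lemma provable_not_until_next a b :
  Pv (FImp (FAnd a (FNeg (FUntil a b))) (FNext (FNeg (FUntil a b)))).
Proof.
  pose proof (Ax_T2' p0 extra a b).
  propositional [FIff (FUntil a b) (FOr b (FAnd a (FSNext (FUntil a b))))].
Qed.

Lemma provable_final_until a b : Pv (FImp (FAnd (FNext (FFalse p0)) (FUntil a b)) b).
Proof.
  pose proof (provable_final_next (FNeg (FUntil a b))). pose proof (Ax_T2' p0 extra a b).
  propositional [FImp (FNext (FFalse p0)) (FNext (FNeg (FUntil a b)));
    FIff (FUntil a b) (FOr b (FAnd a (FSNext (FUntil a b))))].
Qed.

Section Atoms.
Variable Cl : list F.
Hypothesis Cl_closed : subformula_closed Cl.

Definition literal (pb : F * bool) : F := if snd pb then fst pb else FNeg (fst pb).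
Definition chi (A : list bool) : F := big_and (map literal (combine Cl A)).
Definition entails (A : list bool) (f : F) : Prop := Pv (FImp (chi A) f).
Definition consistent (A : list bool) : Prop := ~ Pv (FNeg (chi A)).

Fixpoint bool_lists (n : nat) : list (list bool) :=
  match n with
  | 0 => [[]]
  | S n => map (cons true) (bool_lists n) ++ map (cons false) (bool_lists n)
  end.

Definition atoms : list (list bool) :=
  filter (fun A => decP (consistent A)) (bool_lists (length Cl)).
Definition step (A B : list bool) : Prop := ~ Pv (FNeg (FAnd (chi A) (FSNext (chi B)))).
Definition successors (A : list bool) : list (list bool) :=
  filter (fun B => decP (step A B)) atoms.
Definition final (A : list bool) : Prop := entails A (FNext (FFalse p0)).

Lemma bool_lists_length n A : In A (bool_lists n) -> length A = n.
Proof.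
  revert A; induction n as [|n IH]; simpl; intros A H.
  - now destruct H as [<-|[]].
  - apply in_app_or in H.
    destruct H as [H|H]; apply in_map_iff in H; destruct H as [B [<- HB]]; simpl; auto.
Qed.

Lemma in_bool_lists n A : length A = n -> In A (bool_lists n).
Proof.
  revert A; induction n as [|n IH]; destruct A as [|b A]; simpl; intros H;
    try discriminate; auto.
  apply in_or_app. destruct b; [left|right]; apply in_map, IH; auto.
Qed.

Lemma beval_chi_valuation V : beval V (chi (map (beval V) Cl)) = true.
Proof.
  unfold chi. rewrite beval_big_and. generalize Cl; intros L.
  induction L as [|a L IH]; simpl; auto.
  unfold literal at 1; simpl. destruct (beval V a) eqn:E; simpl; rewrite ?E; auto.
Qed.

Lemma provable_atoms_cover : Pv (big_or (map chi atoms)).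
Proof.
  set (all := bool_lists (length Cl)).
  set (inconsistent := big_and (map (fun A => FNeg (chi A))
                                    (filter (fun A => negb (decP (consistent A))) all))).
  pose proof (provable_big_or_filter chi (fun A => decP (consistent A)) all) as H1.
  assert (H2 : Pv (big_or (map chi all))).
  { apply provable_tautology; intro V; rewrite beval_big_or; apply existsb_exists.
    exists (chi (map (beval V) Cl)).
    split; [apply in_map, in_bool_lists, length_map | apply beval_chi_valuation]. }
  assert (H3 : Pv inconsistent).
  { apply provable_big_and, Forall_forall. intros x Hx.
    apply in_map_iff in Hx. destruct Hx as [A [<- HA]].
    apply filter_In in HA. destruct HA as [_ HA].
    rewrite negb_true_iff, decP_false in HA. now apply NNPP. }
  unfold atoms. fold all.
  propositional [FImp (FAnd (big_or (map chi all)) inconsistent)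
                   (big_or (map chi (filter (fun A => decP (consistent A)) all)));
                 big_or (map chi all); inconsistent].
Qed.

Lemma entails_provable A c : Pv c -> entails A c.
Proof. intros H. unfold entails. propositional [c]. Qed.

Lemma entails_mp A a b : entails A a -> Pv (FImp a b) -> entails A b.
Proof. unfold entails; intros H1 H2. propositional [FImp (chi A) a; FImp a b]. Qed.

Lemma entails_and A a b : entails A a -> entails A b -> entails A (FAnd a b).
Proof. unfold entails; intros H1 H2. propositional [FImp (chi A) a; FImp (chi A) b]. Qed.

Lemma entails_big_and A L : (forall x, In x L -> entails A x) -> entails A (big_and L).
Proof.
  induction L as [|x L IH]; simpl; intros H.
  - apply entails_provable, provable_tautology; truth_table.
  - apply entails_and; auto.
Qed.

Lemma atoms_spec A : In A atoms -> consistent A /\ length A = length Cl.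
Proof.
  unfold atoms; intros H. apply filter_In in H. destruct H as [H1 H2].
  rewrite decP_true in H2. eauto using bool_lists_length.
Qed.

Lemma atom_decides A psi : In A atoms -> In psi Cl -> entails A psi \/ entails A (FNeg psi).
Proof.
  intros HA Hpsi. destruct (atoms_spec A HA) as [_ Hlen].
  assert (Hb : exists b, In (psi, b) (combine Cl A)).
  { clear HA. revert A Hlen Hpsi; generalize Cl; intros L.
    induction L as [|x L IH]; destruct A as [|b A];
      simpl; intros Hlen Hpsi; try contradiction; try discriminate.
    destruct Hpsi as [<-|Hpsi]; [exists b; now left|].
    destruct (IH A ltac:(lia) Hpsi) as [c Hc]. exists c; now right. }
  destruct Hb as [[|] Hb]; [left|right];
    exact (provable_big_and_elem _ _ (in_map literal _ _ Hb)).
Qed.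

Lemma atom_consistent A psi : In A atoms -> entails A psi -> entails A (FNeg psi) -> False.
Proof.
  intros HA H1 H2. apply (proj1 (atoms_spec A HA)). unfold entails in *.
  propositional [FImp (chi A) psi; FImp (chi A) (FNeg psi)].
Qed.

Lemma step_next A B t : step A B -> entails A (FNext t) -> entails B (FNeg t) -> False.
Proof.
  unfold entails; intros HS HA HB. apply HS.
  assert (H : Pv (FImp t (FNeg (chi B)))) by propositional [FImp (chi B) (FNeg t)].
  apply provable_next_mono in H.
  propositional [FImp (chi A) (FNext t); FImp (FNext t) (FNext (FNeg (chi B)))].
Qed.

Lemma entails_next_successors A : entails A (FNext (big_or (map chi (successors A)))).
Proof.
  set (others := map (fun B => FNeg (chi B)) (filter (fun B => negb (decP (step A B))) atoms)).
  pose proof (provable_big_or_filter chi (fun B => decP (step A B)) atoms) as H.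
  change (Pv (FImp (big_and (big_or (map chi atoms) :: others))
                   (big_or (map chi (successors A))))) in H.
  apply provable_next_big_and in H. eapply entails_mp; [|exact H].
  apply entails_big_and. intros x Hx. apply in_map_iff in Hx.
  destruct Hx as [y [<- [<-|Hy]]].
  - apply entails_provable, R_RT1, provable_atoms_cover.
  - apply in_map_iff in Hy. destruct Hy as [B [<- HB]].
    apply filter_In in HB. destruct HB as [_ HB].
    rewrite negb_true_iff, decP_false in HB. apply NNPP in HB.
    unfold entails. propositional [FNeg (FAnd (chi A) (FSNext (chi B)))].
Qed.

Lemma successor_exists A : ~ final A -> exists B, In B atoms /\ step A B.
Proof.
  intros H. destruct (successors A) as [|B r] eqn:E.
  - exfalso; apply H. pose proof (entails_next_successors A) as H0. now rewrite E in H0.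
  - exists B. assert (HB : In B (successors A)) by (rewrite E; now left).
    apply filter_In in HB. now rewrite decP_true in HB.
Qed.

Lemma until_closed a b : In (FUntil a b) Cl -> In a Cl /\ In b Cl.
Proof. intros H. apply Cl_closed in H. split; apply H; simpl; auto. Qed.

Lemma until_persists A B a b : In (FUntil a b) Cl -> In B atoms -> step A B ->
  entails A (FUntil a b) -> entails A (FNeg b) -> entails B (FUntil a b).
Proof.
  intros Hu HB HS Hm Hn.
  destruct (atom_decides B _ HB Hu) as [H|H]; auto. exfalso.
  apply (step_next A B (FUntil a b) HS); [|exact H].
  eapply entails_mp; [apply (entails_and _ _ _ Hm Hn) | apply provable_until_next].
Qed.

Lemma final_until A a b : final A -> entails A (FUntil a b) -> entails A b.
Proof.
  intros Hl Hm. eapply entails_mp; [apply (entails_and _ _ _ Hl Hm) | apply provable_final_until].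
Qed.

Lemma entails_next_step A B a : In A atoms -> In B atoms -> step A B ->
  In (FNext a) Cl -> (entails A (FNext a) <-> entails B a).
Proof.
  intros HA HB HS Hin. assert (Ha : In a Cl) by (apply (Cl_closed _ Hin); now left).
  split; intros H.
  - destruct (atom_decides B a HB Ha) as [h|h]; [exact h|].
    exfalso; exact (step_next A B a HS H h).
  - destruct (atom_decides A _ HA Hin) as [h|h]; [exact h|]. exfalso.
    apply (step_next A B (FNeg a) HS).
    + eapply entails_mp; [exact h | apply provable_not_next].
    + eapply entails_mp; [exact H | apply provable_tautology; truth_table].
Qed.

Lemma until_step_back A B a b : In (FUntil a b) Cl -> In A atoms -> step A B ->
  entails A a -> entails B (FUntil a b) -> entails A (FUntil a b).
Proof.
  intros Hu HA HS Ha HU.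
  destruct (atom_decides A _ HA Hu) as [h|h]; [exact h|]. exfalso.
  apply (step_next A B (FNeg (FUntil a b)) HS).
  - eapply entails_mp; [apply (entails_and _ _ _ Ha h) | apply provable_not_until_next].
  - eapply entails_mp; [exact HU | apply provable_tautology; truth_table].
Qed.

Lemma refuting_atom phi : In phi Cl -> ~ Pv phi ->
  exists A, In A atoms /\ entails A (FNeg phi).
Proof.
  intros Hin Hphi. apply NNPP; intro Hnone. apply Hphi.
  eapply R_MP; [apply provable_atoms_cover|]. apply provable_big_or_elim.
  intros x Hx. apply in_map_iff in Hx. destruct Hx as [A [<- HA]].
  destruct (atom_decides A phi HA Hin) as [h|h]; [exact h|].
  exfalso; apply Hnone; eauto.
Qed.

Fixpoint step_path (A : list bool) (l : list (list bool)) : Prop :=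
  match l with [] => True | B :: l' => In B atoms /\ step A B /\ step_path B l' end.

Fixpoint path_end (A : list bool) (l : list (list bool)) : list bool :=
  match l with [] => A | B :: l' => path_end B l' end.

Lemma step_path_app A l1 l2 :
  step_path A (l1 ++ l2) <-> step_path A l1 /\ step_path (path_end A l1) l2.
Proof. revert A; induction l1; simpl; intros A; [tauto|]. rewrite IHl1. tauto. Qed.

Lemma path_end_app A l1 l2 : path_end A (l1 ++ l2) = path_end (path_end A l1) l2.
Proof. revert A; induction l1; simpl; auto. Qed.

Lemma path_end_atom A l : In A atoms -> step_path A l -> In (path_end A l) atoms.
Proof. revert A; induction l; simpl; intros A H1 H2; auto. apply IHl; tauto. Qed.

Lemma path_end_in A l : In (path_end A l) (A :: l).
Proof. revert A; induction l; simpl; intros A; auto. destruct (IHl a); auto. Qed.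

Definition reachable (A B : list bool) : Prop :=
  exists l, step_path A l /\ path_end A l = B.

Lemma eventuality_reached A a b : In (FUntil a b) Cl -> In A atoms ->
  entails A (FUntil a b) -> exists l, step_path A l /\ entails (path_end A l) b.
Proof.
  intros Hu HA Hm. destruct (until_closed a b Hu) as [_ Hb].
  apply NNPP; intro Hnever.
  set (R := filter (fun B => decP (reachable A B)) atoms).
  (* Otherwise [big_or R] is an invariant for [~ b /\ O _], so RT2 refutes [a U b]. *)
  assert (Hinv : Pv (FImp (big_or (map chi R)) (FAnd (FNeg b) (FNext (big_or (map chi R)))))).
  { apply provable_big_or_elim. intros x Hx. apply in_map_iff in Hx.
    destruct Hx as [B [<- HB]]. apply filter_In in HB. destruct HB as [HB HBR].
    rewrite decP_true in HBR. destruct HBR as [l [Hp Hl]].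
    apply entails_and.
    - destruct (atom_decides B b HB Hb) as [h|h]; auto.
      exfalso; apply Hnever; exists l; now rewrite Hl.
    - eapply entails_mp; [apply entails_next_successors|].
      apply provable_next_mono, provable_big_or_incl.
      intros y Hy. apply in_map_iff in Hy. destruct Hy as [C [<- HC]].
      apply in_map. apply filter_In in HC. destruct HC as [HC HS].
      rewrite decP_true in HS. apply filter_In. split; auto.
      apply decP_true. exists (l ++ [C]).
      rewrite step_path_app, path_end_app, Hl. simpl; tauto. }
  apply R_RT2 with (phi := a) in Hinv.
  assert (HAR : Pv (FImp (chi A) (big_or (map chi R)))).
  { apply provable_big_or_intro, in_map, filter_In. split; auto.
    apply decP_true. exists []. simpl; auto. }
  apply (atom_consistent A (FUntil a b) HA Hm). unfold entails.
  propositional [FImp (chi A) (big_or (map chi R));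
                 FImp (big_or (map chi R)) (FNeg (FUntil a b))].
Qed.

Definition fulfils (A : list bool) (l : list (list bool)) (U : list F) : Prop :=
  forall a b, In (FUntil a b) U -> entails A (FUntil a b) ->
    exists B, In B (A :: l) /\ entails B b.

Lemma until_persists_path a b l A : In (FUntil a b) Cl -> In A atoms ->
  step_path A l -> entails A (FUntil a b) ->
  (forall B, In B (A :: l) -> ~ entails B b) -> entails (path_end A l) (FUntil a b).
Proof.
  intros Hu. destruct (until_closed a b Hu) as [_ Hb]. revert A.
  induction l as [|C l IH]; simpl; intros A HA Hp Hm Hn; auto.
  destruct Hp as [HC [HS Hp]]. apply IH; auto.
  apply (until_persists A C a b); auto.
  destruct (atom_decides A b HA Hb) as [h|h]; auto. exfalso; apply (Hn A); auto.
Qed.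

Lemma fulfilling_path_exists A U : In A atoms -> incl U Cl ->
  exists l, step_path A l /\ fulfils A l U.
Proof.
  intros HA; induction U as [|x U IH]; intros HU.
  - exists []. split; [exact I|]. intros a b [].
  - destruct IH as [l [Hp Hl]]; [intros y Hy; apply HU; now right|].
    destruct (classic (exists a b, x = FUntil a b /\ entails A x /\
                          ~ exists B, In B (A :: l) /\ entails B b))
      as [[a [b [-> [Hm Hn]]]]|Hdone].
    + assert (Hu : In (FUntil a b) Cl) by (apply HU; now left).
      assert (Hend : entails (path_end A l) (FUntil a b)).
      { apply until_persists_path; auto. intros B HB HBb; apply Hn; eauto. }
      destruct (eventuality_reached _ a b Hu (path_end_atom A l HA Hp) Hend)
        as [l2 [Hp2 Hb2]].
      exists (l ++ l2). split; [now apply step_path_app|].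
      intros a' b' [Heq|Hin] Hm'.
      * injection Heq as -> ->. exists (path_end A (l ++ l2)).
        split; [apply path_end_in | now rewrite path_end_app].
      * destruct (Hl a' b' Hin Hm') as [B [HB HBb]]. exists B. split; [|exact HBb].
        destruct HB as [<-|HB]; [now left | right; apply in_or_app; now left].
    + exists l. split; [exact Hp|]. intros a b [Hx|Hin] Hm; [subst x|eauto].
      apply NNPP; intro Hn. apply Hdone; eauto.
Qed.

Definition macro_step_spec (A : list bool) (l : list (list bool)) : Prop :=
  step_path A l /\ (~ final A -> l <> []) /\ fulfils A l Cl.

Lemma macro_step_exists A : In A atoms -> exists l, macro_step_spec A l.
Proof.
  intros HA. destruct (fulfilling_path_exists A Cl HA (incl_refl _)) as [[|B l] [Hp Hl]].
  - destruct (classic (final A)) as [Hf|Hnf].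
    { exists []. split; [exact Hp|]. split; [contradiction | exact Hl]. }
    destruct (successor_exists A Hnf) as [B [HB HS]].
    exists [B]. split; [simpl; auto|]. split; [intros _; discriminate|].
    intros a b Hin Hm. destruct (Hl a b Hin Hm) as [C [[<-|[]] HC]].
    exists A; simpl; auto.
  - exists (B :: l). split; [exact Hp|]. split; [intros _; discriminate | exact Hl].
Qed.

Definition macro_step (A : list bool) : list (list bool) :=
  epsilon (inhabits []) (macro_step_spec A).

Lemma macro_step_correct A : In A atoms -> macro_step_spec A (macro_step A).
Proof. intros H; unfold macro_step; apply epsilon_spec, macro_step_exists, H. Qed.

Section Run.
Variable A0 : list bool.
Hypothesis A0_atom : In A0 atoms.

(* The state is the current atom together with the rest of the macro step
   being traversed; a new macro step starts when that rest is empty. *)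
Definition advance (s : list bool * list (list bool)) : list bool * list (list bool) :=
  match snd s with
  | B :: r => (B, r)
  | [] => match macro_step (fst s) with [] => s | B :: r => (B, r) end
  end.

Fixpoint run (n : nat) : list bool * list (list bool) :=
  match n with 0 => (A0, []) | S n => advance (run n) end.

Definition atom_at (n : nat) : list bool := fst (run n).

Lemma run_invariant n : In (atom_at n) atoms /\ step_path (atom_at n) (snd (run n)).
Proof.
  unfold atom_at; induction n as [|n IH]; simpl; [split; auto|]. unfold advance.
  destruct (run n) as [A [|B r]]; simpl in *; destruct IH as [HA Hp]; [|tauto].
  destruct (macro_step_correct A HA) as [Hm _].
  destruct (macro_step A) as [|B r]; simpl in *; tauto.
Qed.

Lemma atom_at_atom n : In (atom_at n) atoms.
Proof. apply run_invariant. Qed.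

Lemma atom_at_step n : ~ final (atom_at n) -> step (atom_at n) (atom_at (S n)).
Proof.
  pose proof (run_invariant n) as [HA Hp]. unfold atom_at in *; simpl; unfold advance.
  destruct (run n) as [A [|B r]]; simpl in *; intros Hnf; [|tauto].
  destruct (macro_step_correct A HA) as [Hm [Hne _]].
  destruct (macro_step A) as [|B r]; simpl in *; [now destruct (Hne Hnf) | tauto].
Qed.

Lemma run_pop q C r : snd (run q) = C :: r -> run (S q) = (C, r).
Proof. intros H; simpl; unfold advance; now rewrite H. Qed.

Lemma pending_reached l q B : snd (run q) = l -> In B l -> exists t, q < t /\ atom_at t = B.
Proof.
  revert q; induction l as [|C r IH]; intros q Hq HB; [contradiction|].
  pose proof (run_pop q C r Hq) as E.
  destruct HB as [<-|HB].
  - exists (S q). unfold atom_at. rewrite E. split; [lia | reflexivity].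
  - destruct (IH (S q)) as [t [Ht HtB]]; [now rewrite E | exact HB|].
    exists t; split; [lia | exact HtB].
Qed.

Lemma pending_empties n : exists p, n <= p /\ snd (run p) = [].
Proof.
  remember (length (snd (run n))) as k eqn:Hk. revert n Hk.
  induction k as [|k IH]; intros n Hk.
  - exists n. split; auto. now destruct (snd (run n)).
  - destruct (snd (run n)) as [|C r] eqn:E; [now exists n|].
    destruct (IH (S n)) as [p [H1 H2]].
    + rewrite (run_pop n C r E). simpl in *; lia.
    + exists p; split; [lia | exact H2].
Qed.

Lemma macro_step_visited p B : snd (run p) = [] ->
  In B (atom_at p :: macro_step (atom_at p)) -> exists t, p <= t /\ atom_at t = B.
Proof.
  intros Hp [<-|HB]; [now exists p|].
  destruct (macro_step (atom_at p)) as [|C r] eqn:E; [contradiction|].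
  assert (Hrun : run (S p) = (C, r)).
  { simpl; unfold advance; rewrite Hp. unfold atom_at in E. now rewrite E. }
  destruct HB as [<-|HB].
  - exists (S p). unfold atom_at; rewrite Hrun. auto.
  - destruct (pending_reached r (S p) B) as [t [Ht HtB]]; [now rewrite Hrun | exact HB|].
    exists t; split; [lia | exact HtB].
Qed.

Lemma until_persists_run n a b : In (FUntil a b) Cl ->
  entails (atom_at n) (FUntil a b) -> (forall j, n <= j -> ~ entails (atom_at j) b) ->
  forall j, n <= j -> entails (atom_at j) (FUntil a b).
Proof.
  intros Hu Hm Hno j Hj. destruct (until_closed a b Hu) as [_ Hb].
  induction Hj as [|j Hj IH]; [exact Hm|].
  assert (Hnb : entails (atom_at j) (FNeg b)).
  { destruct (atom_decides _ b (atom_at_atom j) Hb) as [h|h]; [|exact h].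
    exfalso; now apply (Hno j). }
  destruct (classic (final (atom_at j))) as [Hf|Hnf].
  - exfalso. apply (Hno j Hj), (final_until _ a b Hf IH).
  - apply (until_persists (atom_at j)); auto using atom_at_atom, atom_at_step.
Qed.

Lemma until_fulfilled n a b : In (FUntil a b) Cl -> entails (atom_at n) (FUntil a b) ->
  exists j, n <= j /\ entails (atom_at j) b.
Proof.
  intros Hu Hm. apply NNPP; intro Hno.
  assert (Hnever : forall j, n <= j -> ~ entails (atom_at j) b) by eauto.
  destruct (pending_empties n) as [p [Hnp Hp]].
  pose proof (until_persists_run n a b Hu Hm Hnever p Hnp) as Hmp.
  destruct (macro_step_correct _ (atom_at_atom p)) as [_ [_ Hful]].
  destruct (Hful a b Hu Hmp) as [B [HB HBb]].
  destruct (macro_step_visited p B Hp HB) as [t [Ht <-]].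
  apply (Hnever t); [lia | exact HBb].
Qed.

Section Model.
Variable len : option nat.

Definition canonical_model : tstruct Phi0 :=
  @TStruct Phi0 nat (fun k => k) len (fun k p => entails (atom_at k) (FVar p)).

Hypothesis last_iff_final :
  forall k, is_pos canonical_model k -> (is_last canonical_model k <-> final (atom_at k)).

Lemma step_at k : is_pos canonical_model k -> ~ is_last canonical_model k ->
  is_pos canonical_model (S k) /\ step (atom_at k) (atom_at (S k)).
Proof.
  intros Hk Hnl. split; [now apply pos_succ|].
  apply atom_at_step. now rewrite <- last_iff_final.
Qed.

Lemma sat_until_entails a b i : In (FUntil a b) Cl ->
  (forall k, is_pos canonical_model k -> sat canonical_model k a -> entails (atom_at k) a) ->
  (forall k, is_pos canonical_model k -> sat canonical_model k b -> entails (atom_at k) b) ->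
  sat canonical_model i (FUntil a b) -> entails (atom_at i) (FUntil a b).
Proof.
  intros Hu IHa IHb [j [Hij [Hpj [Hbj Haj]]]].
  assert (Hback : forall d, d <= j - i -> entails (atom_at (j - d)) (FUntil a b)).
  { induction d as [|d IH]; intros Hd.
    - rewrite Nat.sub_0_r.
      eapply entails_mp; [apply IHb; eauto | apply provable_until_intro].
    - assert (Hpk : is_pos canonical_model (j - S d)) by (apply (pos_le _ _ j); auto; lia).
      destruct (step_at (j - S d) Hpk) as [_ HS]; [apply (not_last_lt _ _ j); auto; lia|].
      replace (S (j - S d)) with (j - d) in HS by lia.
      apply (until_step_back _ _ a b Hu (atom_at_atom _) HS); [|apply IH; lia].
      apply IHa; [exact Hpk | apply Haj; lia]. }
  specialize (Hback (j - i) (le_n _)). now replace (j - (j - i)) with i in Hback by lia.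
Qed.

Lemma entails_until_sat a b i : In (FUntil a b) Cl -> is_pos canonical_model i ->
  (forall k, is_pos canonical_model k -> entails (atom_at k) a -> sat canonical_model k a) ->
  (forall k, is_pos canonical_model k -> entails (atom_at k) b -> sat canonical_model k b) ->
  entails (atom_at i) (FUntil a b) -> sat canonical_model i (FUntil a b).
Proof.
  intros Hu Hi IHa IHb Hm. destruct (until_closed a b Hu) as [_ Hb].
  destruct (until_fulfilled i a b Hu Hm) as [j Hj].
  destruct (least_witness (fun j => i <= j /\ entails (atom_at j) b) j Hj)
    as [j0 [[Hij0 Hb0] Hmin]].
  assert (Hnb : forall k, i <= k < j0 -> entails (atom_at k) (FNeg b)).
  { intros k Hk. destruct (atom_decides _ b (atom_at_atom k) Hb) as [h|h]; [|exact h].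
    exfalso; apply (Hmin k); [lia | split; [lia | exact h]]. }
  assert (Hupto : forall d, i + d <= j0 ->
            is_pos canonical_model (i + d) /\ entails (atom_at (i + d)) (FUntil a b)).
  { induction d as [|d IH]; intros Hd; [rewrite Nat.add_0_r; auto|].
    destruct (IH ltac:(lia)) as [Hp Hm'].
    pose proof (Hnb (i + d) ltac:(lia)) as Hn.
    assert (Hnl : ~ is_last canonical_model (i + d)).
    { rewrite last_iff_final by exact Hp. intros Hf.
      exact (atom_consistent _ b (atom_at_atom _) (final_until _ a b Hf Hm') Hn). }
    destruct (step_at _ Hp Hnl) as [Hp' HS].
    replace (i + S d) with (S (i + d)) by lia.
    split; [exact Hp'|]. apply (until_persists (atom_at (i + d))); auto using atom_at_atom. }
  exists j0. destruct (Hupto (j0 - i) ltac:(lia)) as [Hpj0 _].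
  replace (i + (j0 - i)) with j0 in Hpj0 by lia.
  repeat split; auto.
  intros k Hk. destruct (Hupto (k - i) ltac:(lia)) as [Hpk Hmk].
  replace (i + (k - i)) with k in * by lia.
  apply IHa; [exact Hpk|].
  eapply entails_mp; [apply (entails_and _ _ _ Hmk (Hnb k Hk)) | apply provable_until_left].
Qed.

Lemma truth_lemma psi : In psi Cl -> forall i, is_pos canonical_model i ->
  (sat canonical_model i psi <-> entails (atom_at i) psi).
Proof.
  induction psi as [p|a IHa|a IHa b IHb|a IHa|a IHa b IHb]; intros Hin i Hi.
  - reflexivity.
  - assert (Ha : In a Cl) by (apply (Cl_closed _ Hin); now left).
    cbn [sat]. rewrite IHa by auto. split.
    + intros h. destruct (atom_decides _ a (atom_at_atom i) Ha); tauto.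
    + intros h1 h2. exact (atom_consistent _ a (atom_at_atom i) h2 h1).
  - assert (Ha : In a Cl) by (apply (Cl_closed _ Hin); simpl; auto).
    assert (Hb : In b Cl) by (apply (Cl_closed _ Hin); simpl; auto).
    cbn [sat]. rewrite IHa, IHb by auto. split.
    + intros [h1 h2]; now apply entails_and.
    + intros h; split; eapply entails_mp; try exact h; apply provable_tautology; truth_table.
  - assert (Ha : In a Cl) by (apply (Cl_closed _ Hin); now left).
    cbn [sat]. destruct (classic (is_last canonical_model i)) as [Hl|Hnl].
    + split; [intros _ | now left].
      eapply entails_mp; [apply last_iff_final; eauto | apply provable_final_next].
    + destruct (step_at i Hi Hnl) as [Hp HS]. rewrite IHa by auto.
      rewrite (entails_next_step _ _ a (atom_at_atom i) (atom_at_atom (S i)) HS Hin). tauto.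
  - destruct (until_closed a b Hin) as [Ha Hb]. split.
    + apply sat_until_entails; auto; intros k Hk; [apply IHa | apply IHb]; auto.
    + apply entails_until_sat; auto; intros k Hk; [apply IHa | apply IHb]; auto.
Qed.
End Model.

Lemma canonical_length : exists len, forall k, is_pos (canonical_model len) k ->
  (is_last (canonical_model len) k <-> final (atom_at k)).
Proof.
  destruct (classic (exists k, final (atom_at k))) as [[k Hk]|Hnone].
  - destruct (least_witness (fun k => final (atom_at k)) k Hk) as [n [Hn Hmin]].
    exists (Some n). intros j Hj; unfold is_pos, is_last in *; simpl in *. split.
    + intros E; injection E as ->; exact Hn.
    + intros Hf. destruct (Nat.eq_dec j n) as [->|Hne]; [reflexivity|].
      exfalso; apply (Hmin j); [lia | exact Hf].
  - exists None. intros j _; unfold is_last; simpl.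
    split; [discriminate | intros Hf; exfalso; eauto].
Qed.
End Run.
End Atoms.

Lemma countermodel phi : ~ Pv phi -> exists M : tstruct Phi0, ~ sat M 0 phi /\
  (Pv (FNeg (FNext (FFalse p0))) -> is_infinite M) /\
  (Pv (FEv p0 (FNext (FFalse p0))) -> is_finite M).
Proof.
  intros Hphi.
  set (fin := FEv p0 (FNext (FFalse p0))).
  set (Cl := subformulas phi ++ subformulas fin).
  assert (Hcl : subformula_closed Cl) by (apply subformula_closed_app; apply subformulas_closed).
  assert (Hphi_in : In phi Cl) by (apply in_or_app; left; apply subformulas_self).
  assert (Hfin_in : In fin Cl) by (apply in_or_app; right; apply subformulas_self).
  destruct (refuting_atom Cl phi Hphi_in Hphi) as [A0 [HA0 Hneg]].
  destruct (canonical_length Cl A0) as [len Hlen].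
  exists (canonical_model Cl A0 len).
  split; [|split].
  - rewrite (truth_lemma Cl Hcl A0 HA0 len Hlen phi Hphi_in 0 (pos0 _)).
    intros h. exact (atom_consistent Cl A0 phi HA0 h Hneg).
  - intros Hinf. destruct len as [n|]; [exfalso|reflexivity].
    assert (Hf : final Cl (atom_at Cl A0 n)) by (apply Hlen; unfold is_pos, is_last; simpl; auto).
    exact (atom_consistent Cl _ _ (atom_at_atom Cl Hcl A0 HA0 n) Hf (entails_provable _ _ _ Hinf)).
  - intros Hfin. destruct len as [n|]; [now exists n | exfalso].
    destruct (until_fulfilled Cl Hcl A0 HA0 0 _ _ Hfin_in (entails_provable Cl A0 _ Hfin))
      as [j [_ Hj]].
    apply (Hlen j I) in Hj. discriminate Hj.
Qed.
End Completeness.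

Lemma completeness (C : tstruct Phi0 -> Prop) extra :
  (forall M, (provable p0 extra (FNeg (FNext (FFalse p0))) -> is_infinite M) ->
             (provable p0 extra (FEv p0 (FNext (FFalse p0))) -> is_finite M) -> C M) ->
  forall phi, valid_in C phi -> provable p0 extra phi.
Proof.
  intros HC phi Hvalid. apply NNPP; intros Hphi.
  destruct (countermodel extra phi Hphi) as [M [HM [Hinf Hfin]]].
  apply HM, Hvalid; [now apply HC | apply pos0].
Qed.

Lemma inf_axiom_valid phi : inf_axiom p0 phi -> valid_in (@is_infinite Phi0) phi.
Proof.
  intros -> M HM i _ [Hl|Hf]; [unfold is_last in Hl; congruence | exact (sat_false M _ Hf)].
Qed.

Lemma fin_axiom_valid phi : fin_axiom p0 phi -> valid_in (@is_finite Phi0) phi.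
Proof.
  intros -> M [n Hn] i Hi. unfold FEv; cbn [sat].
  exists n. unfold is_pos in *; rewrite Hn in *.
  split; [exact Hi|]. split; [reflexivity|]. split; [now left|]. intros; apply sat_true.
Qed.
End LTL.

Theorem theorem1 (Phi0 : Type) (p0 : Phi0) :
  (forall phi : form Phi0,
      AXgen p0 phi <-> valid_in (fun _ : tstruct Phi0 => True) phi) /\
  (forall phi : form Phi0,
      AXinf p0 phi <-> valid_in (@is_infinite Phi0) phi) /\
  (forall phi : form Phi0,
      AXfin p0 phi <-> valid_in (@is_finite Phi0) phi).
Proof.
  split; [|split]; intros phi; split.
  - apply soundness. intros psi [].
  - apply completeness. auto.
  - apply soundness, inf_axiom_valid.
  - apply completeness. intros M Hinf _. now apply Hinf, Ax_extra.
  - apply soundness, fin_axiom_valid.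
  - apply completeness. intros M _ Hfin. now apply Hfin, Ax_extra.
Qed.
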